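(* Let $k\ge1$ and $R\neq0$. Consider an indecomposable linear differential system $$y'=\Big(\frac{A_0+A_1x+\dots+A_kx^k}{x^{k+1}}+\frac{\widehat A_R}{x-R}\Big)y=\frac{B(x)}{x^{k+1}(x-R)}y,\qquad y\in\mathbb{C}^n,$$ where $A_0$ is diagonal with distinct eigenvalues. Then there exist $n-1$ distinct pairs $(i_\ell,j_\ell)$ with $i_\ell\neq j_\ell$, $\ell=1,\dots,n-1$, and exponents $m_{i_\ell,j_\ell}\in\{1,\dots,k+1\}$, with the following property. The equation is conjugate, by means of an invertible diagonal transformation, to a unique system in which the coefficient of the monomial $x^{m_{i_\ell,j_\ell}}$ of the entry $(B)_{i_\ell,j_\ell}$ equals $1$ for each $\ell$. The only automorphisms of this normalized unique system are the scalar matrices $cI_n$, $c\in\mathbb{C}^*$.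
   Context: The system is indecomposable if it cannot be gauge transformed to a block diagonal form. An automorphism of the system is an invertible gauge transformation $y=gz$ transforming the system into itself. *)

From HB Require Import structures.
From mathcomp Require Import all_boot all_order all_algebra.
From mathcomp Require Import reals.
From mathcomp.real_closed Require Import complex.
Set Implicit Arguments. Unset Strict Implicit. Unset Printing Implicit Defensive.
Import Order.TTheory GRing.Theory Num.Theory.
Local Open Scope ring_scope.

(* A system  y' = ( (A_0 + A_1 x + ... + A_k x^k)/x^(k+1) + AR/(x - r0) ) y
   is encoded by its constant coefficient data: A : 'I_k.+1 -> 'M_n (A i = A_i)
   and AR : 'M_n.  The pole r0 and k are fixed parameters. *)
Definition system (C : Type) (n k : nat) : Type :=
  (('I_k.+1 -> 'M[C]_n) * 'M[C]_n)%type.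

Definition gauge (C : fieldType) (n k : nat) (g : 'M[C]_n) (S : system C n k)
  : system C n k :=
  (fun i => invmx g *m S.1 i *m g, invmx g *m S.2 *m g).

(* The polynomial matrix B(x) = (A_0 + ... + A_k x^k)(x - r0) + AR x^(k+1),
   so that the system reads y' = B(x) / (x^(k+1) (x - r0)) y. *)
Definition Bpoly (C : fieldType) (n k : nat) (r0 : C) (S : system C n k)
  : 'M[{poly C}]_n :=
  ('X - r0%:P) *: (\sum_(i < k.+1) 'X^i *: map_mx polyC (S.1 i))
  + 'X^(k.+1) *: map_mx polyC S.2.

Definition block_diag2 (C : fieldType) (n : nat) (p : nat) (M : 'M[C]_n) : Prop :=
  forall i j : 'I_n, (i < p)%N != (j < p)%N -> M i j = 0.

Definition is_block_diag_sys (C : fieldType) (n k : nat) (S : system C n k) : Prop :=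
  exists p : nat, [/\ (0 < p)%N, (p < n)%N,
    (forall i, block_diag2 p (S.1 i)) & block_diag2 p S.2].

Definition indecomposable (C : fieldType) (n k : nat) (S : system C n k) : Prop :=
  ~ exists g : 'M[C]_n, g \in unitmx /\ is_block_diag_sys (gauge g S).

Definition automorphism (C : fieldType) (n k : nat) (S : system C n k)
  (g : 'M[C]_n) : Prop :=
  g \in unitmx /\ gauge g S = S.

Definition invertible_diagonal (C : fieldType) (n : nat) (D : 'M[C]_n) : Prop :=
  is_diag_mx D /\ D \in unitmx.

(* A diagonal gauge diag(d) multiplies the entry B_ab of B(x) by d_b / d_a.
   Indecomposability makes the graph on {1..n} with an edge a - b whenever B_ab or
   B_ba is nonzero connected, since a cut of that graph would be split off by a
   permutation gauge.  A spanning tree has n - 1 edges (a, b), oriented so that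
   B_ab <> 0; as A_0 is diagonal, B_ab(0) = 0 and its degree m_ab lies in
   [1, k+1].  Normalizing the leading coefficients of these B_ab prescribes the
   ratios d_b / d_a along the tree, which determines d up to a scalar.  An
   automorphism commutes with the diagonal matrix A_0 of distinct eigenvalues, so
   it is diagonal, and preserving the normalized coefficients forces it to be
   constant along the tree, i.e. scalar. *)

From HB Require Import structures.
From mathcomp Require Import all_boot all_order all_algebra.
From mathcomp Require Import reals.
From mathcomp.real_closed Require Import complex.
From mathcomp Require Import fingroup perm ring zify.
From Stdlib Require Import FunctionalExtensionality.
Import Order.TTheory GRing.Theory Num.Theory.
Set Implicit Arguments. Unset Strict Implicit. Unset Printing Implicit Defensive.
Local Open Scope ring_scope.

Section Gauge.
Variables (C : fieldType) (n : nat).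
Implicit Types (D M : 'M[C]_n).

Lemma mulmx1_invmx (M N : 'M[C]_n) : M *m N = 1%:M -> invmx M = N.
Proof.
move=> MN; have [uM _] := mulmx1_unit MN.
by rewrite -[invmx M]mulmx1 -MN mulKmx.
Qed.

Lemma invmx_diag (d : 'rV[C]_n) :
  (forall i, d 0 i != 0) -> invmx (diag_mx d) = diag_mx (\row_i (d 0 i)^-1).
Proof.
move=> d_nz; apply: mulmx1_invmx; rewrite mulmx_diag -diag_const_mx.
by congr diag_mx; apply/rowP => i; rewrite !mxE divff.
Qed.

Lemma invertible_diagonalE D :
  invertible_diagonal D -> (forall i, D i i != 0) /\ D = diag_mx (\row_i D i i).
Proof.
move=> [/diag_mxP[d ->]]; rewrite unitmxE det_diag unitfE => /prodf_neq0 d_nz.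
split; first by move=> i; rewrite mxE eqxx mulr1n d_nz.
by apply/matrixP => i j; rewrite !mxE eqxx mulr1n.
Qed.

Lemma invertible_diagonal_diag (d : 'rV[C]_n) :
  (forall i, d 0 i != 0) -> invertible_diagonal (diag_mx d).
Proof.
move=> d_nz; split; first exact: diag_mx_is_diag.
by rewrite unitmxE det_diag unitfE; apply/prodf_neq0 => i _.
Qed.

Lemma conj_diagE D M i j :
  invertible_diagonal D -> (invmx D *m M *m D) i j = M i j * (D j j / D i i).
Proof.
move=> /invertible_diagonalE[D_nz ->]; rewrite invmx_diag => [|i']; last by rewrite mxE.
by rewrite mul_mx_diag mul_diag_mx !mxE !eqxx !mulr1n mulrAC mulrC [_^-1 * _]mulrC.
Qed.

Lemma gauge_diag_eq k (S : system C n k) (D1 D2 : 'M[C]_n) :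
    invertible_diagonal D1 -> invertible_diagonal D2 ->
  (forall a b, D1 b b / D1 a a = D2 b b / D2 a a) -> gauge D1 S = gauge D2 S.
Proof.
move=> D1i D2i ratio; rewrite /gauge; congr pair.
  by apply: functional_extensionality => t; apply/matrixP => a b; rewrite !conj_diagE ?ratio.
by apply/matrixP => a b; rewrite !conj_diagE ?ratio.
Qed.

Lemma invertible_diagonal_scalar (c : C) : c != 0 -> invertible_diagonal (c%:M : 'M[C]_n).
Proof.
by move=> c_nz; rewrite -diag_const_mx; apply: invertible_diagonal_diag => i; rewrite mxE.
Qed.

Lemma automorphism_scalar k (S : system C n k) (c : C) : c != 0 -> automorphism S c%:M.
Proof.
move=> c_nz; have cD := invertible_diagonal_scalar c_nz; split; first by case: cD.
case: S => S1 S2; rewrite /gauge; congr pair; first apply: functional_extensionality => t.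
all: by apply/matrixP => a b; rewrite conj_diagE // !mxE !eqxx !mulr1n divff // mulr1.
Qed.

Lemma diag_commute_is_diag (A g : 'M[C]_n) :
    is_diag_mx A -> (forall i j, i != j -> A i i != A j j) ->
  A *m g = g *m A -> is_diag_mx g.
Proof.
move=> /diag_mxP[d ->] d_inj Ag; apply/is_diag_mxP => i j ij.
have := congr1 (fun M : 'M_n => M i j) Ag; rewrite mul_mx_diag mul_diag_mx !mxE.
have ij' : i != j by apply: contraNneq ij => ->.
move=> /eqP; rewrite mulrC -subr_eq0 -mulrBr mulf_eq0 subr_eq0 => /orP[/eqP // | /eqP dij].
by have := d_inj i j ij'; rewrite !mxE !eqxx !mulr1n dij eqxx.
Qed.

End Gauge.

Lemma scalar_of_const_diag (C : fieldType) n (g : 'M[C]_n) :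
    invertible_diagonal g -> (forall i j, g i i = g j j) ->
  exists c : C, c != 0 /\ g = c%:M.
Proof.
case: n g => [|n'] g gi gc.
  by exists 1; split; [exact: oner_neq0 | apply/matrixP => -[]].
have [g_nz ->] := invertible_diagonalE gi; exists (g ord0 ord0); split => //.
by rewrite -diag_const_mx; congr diag_mx; apply/rowP => i; rewrite !mxE (gc i ord0).
Qed.

Lemma perm_prefix_set n (X : {set 'I_n}) :
  exists s : 'S_n, forall i, (s i \in X) = (i < #|X|)%N.
Proof.
case: n X => [|n] X; first by exists 1%g => -[].
pose L := enum X ++ enum (~: X).
have size_L : size L = n.+1 by rewrite size_cat -!cardE cardsC card_ord.
have uniq_L : uniq L.
  rewrite cat_uniq !enum_uniq /= andbT; apply/hasPn => x.
  by rewrite !mem_enum in_setC.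
have nth_L_inj : injective (fun i : 'I_n.+1 => nth ord0 L i).
  by move=> i j /eqP; rewrite nth_uniq ?size_L // => /eqP/val_inj.
exists (perm nth_L_inj) => i; rewrite permE /L nth_cat -cardE.
have i_lt := ltn_ord i; case: ltnP => [iX|Xi].
  by rewrite -mem_enum mem_nth // -cardE.
apply/negbTE; rewrite -in_setC -mem_enum mem_nth // -cardE.
by rewrite ltn_subLR // cardsC card_ord.
Qed.

Lemma conj_perm_mxE (C : fieldType) n (s : 'S_n) (M : 'M[C]_n) a b :
  (invmx (perm_mx s^-1) *m M *m perm_mx s^-1) a b = M (s a) (s b).
Proof.
have -> : invmx (perm_mx s^-1) = perm_mx s :> 'M[C]_n.
  by apply: mulmx1_invmx; rewrite -perm_mxM mulVg perm_mx1.
by rewrite -row_permE -col_permE !mxE.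
Qed.

Lemma gauge_block_diag_of_cut (C : fieldType) n k (S : system C n k) (X : {set 'I_n}) :
    (0 < #|X| < n)%N ->
    (forall a b, (a \in X) != (b \in X) -> (forall t, S.1 t a b = 0) /\ S.2 a b = 0) ->
  exists g, g \in unitmx /\ is_block_diag_sys (gauge g S).
Proof.
move=> /andP[X_gt0 X_lt] cut; have [s sX] := perm_prefix_set X.
exists (perm_mx s^-1); split; first exact: unitmx_perm.
exists #|X|; split => // [t|] i j; rewrite -!sX => /cut[S1_0 S2_0];
  by rewrite /= conj_perm_mxE.
Qed.

Section Bpoly.
Variables (C : fieldType) (n k : nat) (r0 : C).
Implicit Types (S : system C n k) (a b : 'I_n).

Lemma BpolyE S a b :
  Bpoly r0 S a b = ('X - r0%:P) * \poly_(t < k.+1) S.1 (inord t) a b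
                   + 'X^(k.+1) * (S.2 a b)%:P.
Proof.
rewrite /Bpoly !mxE summxE poly_def; congr (_ * _ + _).
by apply: eq_bigr => t _; rewrite !mxE inord_val -mul_polyC mulrC.
Qed.

Lemma Bpoly_scale S S' a b (x : C) :
    (forall t, S'.1 t a b = S.1 t a b * x) -> S'.2 a b = S.2 a b * x ->
  Bpoly r0 S' a b = Bpoly r0 S a b * x%:P.
Proof.
move=> S1x S2x; rewrite !BpolyE S2x polyCM.
have -> : \poly_(t < k.+1) S'.1 (inord t) a b = \poly_(t < k.+1) S.1 (inord t) a b * x%:P.
  by apply/polyP => t; rewrite coefMC !coef_poly; case: ifP; rewrite ?S1x ?mul0r.
by ring.
Qed.

Lemma Bpoly_gauge_coef S (D : 'M[C]_n) a b m :
    invertible_diagonal D ->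
  (Bpoly r0 (gauge D S) a b)`_m = (Bpoly r0 S a b)`_m * (D b b / D a a).
Proof.
move=> Di; rewrite (@Bpoly_scale S _ _ _ (D b b / D a a)) ?coefMC // => *.
all: by rewrite /= conj_diagE.
Qed.

Lemma Bpoly_eq0 S a b :
  r0 != 0 -> Bpoly r0 S a b = 0 -> (forall t, S.1 t a b = 0) /\ S.2 a b = 0.
Proof.
move=> r0_nz; rewrite BpolyE => B0.
have S2_0 : S.2 a b = 0.
  have := congr1 (horner^~ r0) B0; rewrite !hornerE subrr mul0r add0r => /eqP.
  by rewrite mulf_eq0 expf_eq0 (negPf r0_nz) andbF => /eqP.
split=> // t; move: B0; rewrite S2_0 mulr0 addr0 => /eqP.
rewrite mulf_eq0 polyXsubC_eq0 /= => /eqP/(congr1 (coefp t)).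
by rewrite /= coef_poly ltn_ord inord_val coef0.
Qed.

Lemma Bpoly_offdiag_degree S a b :
    is_diag_mx (S.1 ord0) -> a != b -> Bpoly r0 S a b != 0 ->
  (1 <= (size (Bpoly r0 S a b)).-1 <= k.+1)%N.
Proof.
move=> /is_diag_mxP A0_diag ab B_nz.
have size_le : (size (Bpoly r0 S a b) <= k.+2)%N.
  rewrite BpolyE; apply: (leq_trans (size_add _ _)); rewrite geq_max.
  apply/andP; split; apply: (leq_trans (size_mul_leq _ _)).
    by rewrite size_XsubC add2n ltnS size_poly.
  by rewrite size_polyXn; have := size_polyC_leq1 (S.2 a b); lia.
have coef0_B : (Bpoly r0 S a b)`_0 = 0.
  rewrite BpolyE coefD !coef0M coef_poly /= coefXn mul0r addr0.
  by rewrite (inord_val (@ord0 k)) A0_diag ?mulr0.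
have size_gt1 : (1 < size (Bpoly r0 S a b))%N.
  by rewrite ltnNge; apply: contra B_nz => /size1_polyC ->; rewrite coef0_B polyC0.
by lia.
Qed.

End Bpoly.

Lemma indecomposable_connect (C : fieldType) n k (r0 : C) (S : system C n k) :
    r0 != 0 -> indecomposable S ->
  forall i j, connect (fun a b => (Bpoly r0 S a b != 0) || (Bpoly r0 S b a != 0)) i j.
Proof.
move=> r0_nz S_indec i j; set u := fun a b => _ || _; apply/idPn => not_ij.
apply: S_indec; pose X := [set x | connect u i x].
apply: (@gauge_block_diag_of_cut _ _ _ _ X).
  apply/andP; split; first by apply/card_gt0P; exists i; rewrite inE connect0.
  have XT : X \proper [set: 'I_n].
    by apply/properP; split; [exact: subsetT | exists j; rewrite !inE].
  by have := proper_card XT; rewrite cardsT card_ord.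
have cut_Bpoly a b : a \in X -> b \notin X -> ~~ u a b.
  rewrite !inE => ia; apply: contra => uab; exact: connect_trans ia (connect1 uab).
move=> a b; case: (boolP (a \in X)) => aX; case: (boolP (b \in X)) => bX //= _.
all: apply: (Bpoly_eq0 r0_nz).
  by have := cut_Bpoly a b aX bX; rewrite negb_or !negbK => /andP[/eqP].
by have := cut_Bpoly b a bX aX; rewrite negb_or !negbK => /andP[_ /eqP].
Qed.

Lemma connect_parent_rank (T : finType) (u : rel T) (r : T) :
    (forall j, connect u r j) ->
  exists (par : T -> T) (rank : T -> nat),
    forall j, j != r -> u (par j) j && (rank (par j) < rank j)%N.
Proof.
move=> r_conn.
pose reach j t := [exists s : t.-tuple T, path u r s && (last r s == j)].
have reach_ex j : exists t, reach j t.
  have /connectP[s us ->] := r_conn j.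
  by exists (size s); apply/existsP; exists (in_tuple s); rewrite us eqxx.
pose rank j := ex_minn (reach_ex j).
have rank_le s : path u r s -> (rank (last r s) <= size s)%N.
  move=> us; rewrite /rank; case: ex_minnP => t _; apply.
  by apply/existsP; exists (in_tuple s); rewrite us eqxx.
have rank_path j : exists s, [/\ path u r s, last r s = j & size s = rank j].
  rewrite /rank; case: ex_minnP => t /existsP[s /andP[us /eqP sj]] _.
  by exists s; rewrite size_tuple.
have parent j : exists i, j != r -> u i j && (rank i < rank j)%N.
  have [s [us <-{j} <-]] := rank_path j; exists (last r (belast r s)).
  case/lastP: s us => [|s x]; first by rewrite eqxx.
  rewrite rcons_path last_rcons size_rcons belast_rcons /= => /andP[us ux] _.
  by rewrite ux ltnS rank_le.
have [par parP] := fin_all_exists parent.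
by exists par, rank.
Qed.

Section ParentTree.
Variables (T : finType) (r : T) (par : T -> T) (rank : T -> nat).
Hypothesis rank_par : forall j, j != r -> (rank (par j) < rank j)%N.

Lemma parent_ind (P : T -> Prop) :
  P r -> (forall j, j != r -> P (par j) -> P j) -> forall j, P j.
Proof.
move=> Pr Ppar j; have [t] := ubnP (rank j); elim: t j => // t IHt j rank_j.
case: (eqVneq j r) => [-> // | jr]; apply: (Ppar _ jr (IHt _ _)).
exact: leq_trans (rank_par jr) _.
Qed.

Lemma parent_neq j : j != r -> par j != j.
Proof. by move=> /rank_par; apply: contraTneq => ->; rewrite ltnn. Qed.

Lemma parent_2cycle j1 j2 : j1 != r -> j2 != r -> par j1 = j2 -> par j2 != j1.
Proof.
move=> j1r j2r p1; apply/eqP => p2.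
move: (rank_par j1r) (rank_par j2r); rewrite p1 p2 => lt21 lt12.
by have := ltn_trans lt12 lt21; rewrite ltnn.
Qed.

Fixpoint climb (U : Type) (x0 : U) (f : T -> U -> U) (t : nat) (j : T) : U :=
  if t is t'.+1 then (if j == r then x0 else f j (climb x0 f t' (par j))) else x0.

Lemma parent_rec (U : Type) (x0 : U) (f : T -> U -> U) :
  exists d : T -> U, d r = x0 /\ forall j, j != r -> d j = f j (d (par j)).
Proof.
have climb_stable t1 t2 j : (rank j < t1)%N -> (rank j < t2)%N ->
    climb x0 f t1 j = climb x0 f t2 j.
  elim: t1 t2 j => // t1 IH [//|t2] j /= lt1 lt2; case: (eqVneq j r) => // jr.
  by congr f; apply: IH; apply: leq_trans (rank_par jr) _.
pose d j := climb x0 f (rank j).+1 j; exists d; split=> [|j jr]; first by rewrite /d /= eqxx.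
by rewrite {1}/d /= (negPf jr); congr f; exact: climb_stable (rank_par jr) (ltnSn _).
Qed.

End ParentTree.

Section SpanningTree.
Variables (n : nat) (e : rel 'I_n.+1) (par : 'I_n.+1 -> 'I_n.+1) (rank : 'I_n.+1 -> nat).
Hypothesis parP :
  forall j, j != ord0 -> (e (par j) j || e j (par j)) && (rank (par j) < rank j)%N.

Let rank_par j : j != ord0 -> (rank (par j) < rank j)%N.
Proof. by move=> /parP/andP[]. Qed.

Let lift_neq0 (l : 'I_n) : lift ord0 l != ord0.
Proof. by rewrite eq_sym neq_lift. Qed.

Definition tree_edge (l : 'I_n) : 'I_n.+1 * 'I_n.+1 :=
  let j := lift ord0 l in if e (par j) j then (par j, j) else (j, par j).

Lemma tree_edge_inj : injective tree_edge.
Proof.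
move=> l1 l2; have := parent_2cycle rank_par (lift_neq0 l1) (lift_neq0 l2).
rewrite /tree_edge /=; case: ifP => _; case: ifP => _ no_2cycle /eqP;
  rewrite xpair_eqE => /andP[/eqP E1 /eqP E2]; apply: (@lift_inj _ ord0) => //.
- by have := no_2cycle E1; rewrite E2 eqxx.
- by have := no_2cycle E2; rewrite E1 eqxx.
Qed.

Lemma tree_edge_neq l : (tree_edge l).1 != (tree_edge l).2.
Proof.
have := parent_neq rank_par (lift_neq0 l).
by rewrite /tree_edge /=; case: ifP => _ //=; rewrite eq_sym.
Qed.

Lemma tree_edge_rel l : e (tree_edge l).1 (tree_edge l).2.
Proof.
rewrite /tree_edge /=; case: ifP => //= /negbT e_par.
by have /andP[] := parP (lift_neq0 l); rewrite (negPf e_par).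
Qed.

Let lift_onto (j : 'I_n.+1) : j != ord0 -> exists l, j = lift ord0 l.
Proof. by case: (unliftP ord0 j) => [l ->|->]; [exists l | rewrite eqxx]. Qed.

Lemma tree_edge_span (U : Type) (f : 'I_n.+1 -> U) :
  (forall l, f (tree_edge l).1 = f (tree_edge l).2) -> forall i j, f i = f j.
Proof.
move=> f_edge; suff f_root j : f j = f ord0 by move=> i j; rewrite !f_root.
elim/(parent_ind rank_par): j => // j j0 f_par; have [l jl] := lift_onto j0.
by have := f_edge l; rewrite /tree_edge -jl /=; case: ifP => _ fe; rewrite ?fe // -fe.
Qed.

Lemma tree_edge_potential (C : fieldType) (w : 'I_n -> C) :
    (forall l, w l != 0) ->
  exists d : 'I_n.+1 -> C,
    (forall j, d j != 0) /\ forall l, d (tree_edge l).2 = w l * d (tree_edge l).1.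
Proof.
move=> w_nz; pose step j x := if unlift ord0 j is Some l then
  (if e (par j) j then w l * x else x / w l) else x.
have [d [d0 d_par]] := parent_rec rank_par 1 step; exists d; split.
  elim/(parent_ind rank_par) => [|j j0 dpar_nz]; first by rewrite d0 oner_neq0.
  rewrite d_par // /step; case: unlift => [l|//].
  by case: ifP => _; rewrite ?mulf_neq0 ?invr_eq0.
move=> l; have := d_par _ (lift_neq0 l); rewrite /step liftK /tree_edge /=.
by case: ifP => _ ->; rewrite // mulrC divfK.
Qed.

End SpanningTree.

Lemma spanning_tree (C : fieldType) n (e : rel 'I_n) :
    (forall i j, connect (fun a b => e a b || e b a) i j) ->
  exists ij : 'I_n.-1 -> 'I_n * 'I_n,
    [/\ injective ij, forall l, (ij l).1 != (ij l).2, forall l, e (ij l).1 (ij l).2,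
        forall f : 'I_n -> C, (forall l, f (ij l).1 = f (ij l).2) -> forall i j, f i = f j
      & forall w : 'I_n.-1 -> C, (forall l, w l != 0) ->
          exists d : 'I_n -> C,
            (forall j, d j != 0) /\ forall l, d (ij l).2 = w l * d (ij l).1].
Proof.
case: n e => [|n] e e_conn.
  have no_ord0 (l : 'I_0) : False by case: l => m; rewrite ltn0.
  exists (fun l => (l, l)); split=> [l|l|l|f _ i|w _] //; try by case: (no_ord0 l).
  by exists (fun=> 1); split=> [|l]; [move=> _; exact: oner_neq0 | case: (no_ord0 l)].
have [par [rank parP]] := connect_parent_rank (e_conn ord0).
exists (tree_edge e par); split.
- exact: tree_edge_inj parP.
- exact: tree_edge_neq parP.
- exact: tree_edge_rel parP.
- by move=> f f_edge; exact: (tree_edge_span parP f_edge).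
- by move=> w w_nz; exact: (tree_edge_potential parP w_nz).
Qed.

Definition normalizes (C : fieldType) n k (r0 : C) (S : system C n k) (I : Type)
    (ij : I -> 'I_n * 'I_n) (D : 'M[C]_n) : Prop :=
  forall l,
    (Bpoly r0 (gauge D S) (ij l).1 (ij l).2)`_((size (Bpoly r0 S (ij l).1 (ij l).2)).-1) = 1.

Section Normalization.
Variables (C : fieldType) (n k : nat) (r0 : C) (S : system C n k).
Variables (I : Type) (ij : I -> 'I_n * 'I_n).
Hypothesis edge_nz : forall l, Bpoly r0 S (ij l).1 (ij l).2 != 0.

Let lead l := lead_coef (Bpoly r0 S (ij l).1 (ij l).2).

Let lead_nz l : lead l != 0. Proof. by rewrite lead_coef_eq0. Qed.

Lemma normalizesE D :
  invertible_diagonal D ->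
  normalizes r0 S ij D <-> forall l, lead l * (D (ij l).2 (ij l).2 / D (ij l).1 (ij l).1) = 1.
Proof. by move=> Di; split=> h l; move: (h l); rewrite Bpoly_gauge_coef // -lead_coefE. Qed.

Lemma normalizing_gauge_exists :
    (forall w : I -> C, (forall l, w l != 0) ->
       exists d : 'I_n -> C,
         (forall j, d j != 0) /\ forall l, d (ij l).2 = w l * d (ij l).1) ->
  exists D, invertible_diagonal D /\ normalizes r0 S ij D.
Proof.
move=> potential; have /potential[d [d_nz d_edge]] : forall l, (lead l)^-1 != 0.
  by move=> l; rewrite invr_eq0.
have Di : invertible_diagonal (diag_mx (\row_j d j)).
  by apply: invertible_diagonal_diag => j; rewrite mxE.
exists (diag_mx (\row_j d j)); split; rewrite // normalizesE // => l.
by rewrite !mxE !eqxx !mulr1n d_edge mulfK // mulfV.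
Qed.

Hypothesis edges_span :
  forall f : 'I_n -> C, (forall l, f (ij l).1 = f (ij l).2) -> forall i j, f i = f j.

Lemma normalized_gauge_unique D1 D2 :
    invertible_diagonal D1 -> invertible_diagonal D2 ->
    normalizes r0 S ij D1 -> normalizes r0 S ij D2 ->
  gauge D1 S = gauge D2 S.
Proof.
move=> D1i D2i /(normalizesE D1i) D1n /(normalizesE D2i) D2n.
have [D1_nz _] := invertible_diagonalE D1i; have [D2_nz _] := invertible_diagonalE D2i.
have ratio_const i j : D2 i i / D1 i i = D2 j j / D1 j j.
  apply: (edges_span (f := fun j => D2 j j / D1 j j)) => {i j} l.
  have := D1n l; rewrite -(D2n l) => /(mulfI (lead_nz l)) /eqP.
  by rewrite !eqr_div // => /eqP E; apply/eqP; rewrite eqr_div // mulrC E.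
apply: gauge_diag_eq => // a b; have /eqP := ratio_const a b.
by rewrite !eqr_div // => /eqP E; apply/eqP; rewrite eqr_div // mulrC E.
Qed.

Lemma normalized_automorphismP :
    is_diag_mx (S.1 ord0) -> (forall i j, i != j -> S.1 ord0 i i != S.1 ord0 j j) ->
  forall D, invertible_diagonal D -> normalizes r0 S ij D ->
  forall g, automorphism (gauge D S) g <-> exists c, c != 0 /\ g = c%:M.
Proof.
move=> A0_diag A0_distinct D Di Dn g.
split; last by move=> [c [c_nz ->]]; exact: automorphism_scalar.
move=> [g_unit g_fix]; have [D_nz _] := invertible_diagonalE Di.
have A'E i j : (gauge D S).1 ord0 i j = S.1 ord0 i j * (D j j / D i i) by exact: conj_diagE.
have gi : invertible_diagonal g.
  split=> //; apply: (@diag_commute_is_diag _ _ ((gauge D S).1 ord0)).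
  - by apply/is_diag_mxP => i j neq_ij; rewrite A'E (is_diag_mxP A0_diag) ?mul0r.
  - by move=> i j neq_ij; rewrite !A'E !divff ?mulr1 ?A0_distinct.
  have /(congr1 (fun S' => S'.1 ord0)) /= g_fix1 := g_fix.
  by rewrite -{2}g_fix1 !mulmxA mulmxV // mul1mx.
apply: (scalar_of_const_diag gi); apply: (edges_span (f := fun j => g j j)) => l.
have := Bpoly_gauge_coef r0 (gauge D S) (ij l).1 (ij l).2
  (size (Bpoly r0 S (ij l).1 (ij l).2)).-1 gi.
by rewrite g_fix Dn mul1r => /esym/divr1_eq.
Qed.

End Normalization.

Theorem mainTheorem7 (Rr : realType) (n k : nat) (r0 : Rr[i])
    (A : 'I_k.+1 -> 'M[Rr[i]]_n) (AR : 'M[Rr[i]]_n) :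
  (1 <= k)%N -> r0 != 0 ->
  is_diag_mx (A ord0) ->
  (forall i j : 'I_n, i != j -> A ord0 i i != A ord0 j j) ->
  indecomposable ((A, AR) : system Rr[i] n k) ->
  exists (ij : 'I_n.-1 -> 'I_n * 'I_n) (m : 'I_n.-1 -> nat),
    [/\ injective ij,
        (forall l, (ij l).1 != (ij l).2),
        (forall l, (1 <= m l <= k.+1)%N),
        (* existence of a diagonal conjugation to a normalized system *)
        (exists D : 'M[Rr[i]]_n, invertible_diagonal D /\
           forall l, (Bpoly r0 (gauge D (A, AR)) (ij l).1 (ij l).2)`_(m l) = 1) &
        ((* uniqueness of the normalized system *)
        (forall D1 D2 : 'M[Rr[i]]_n,
           invertible_diagonal D1 -> invertible_diagonal D2 ->
           (forall l, (Bpoly r0 (gauge D1 (A, AR)) (ij l).1 (ij l).2)`_(m l) = 1) ->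
           (forall l, (Bpoly r0 (gauge D2 (A, AR)) (ij l).1 (ij l).2)`_(m l) = 1) ->
           gauge D1 (A, AR) = gauge D2 (A, AR)) /\
        (* automorphisms of the normalized system are exactly the c I_n, c <> 0 *)
        (forall D : 'M[Rr[i]]_n, invertible_diagonal D ->
           (forall l, (Bpoly r0 (gauge D (A, AR)) (ij l).1 (ij l).2)`_(m l) = 1) ->
           forall g : 'M[Rr[i]]_n,
             automorphism (gauge D (A, AR)) g <-> exists c : Rr[i], c != 0 /\ g = c%:M))].
Proof.
move=> _ r0_nz A0_diag A0_distinct S_indec; set S := (A, AR) : system _ n k.
have [ij [ij_inj ij_offdiag ij_nz ij_span ij_potential]] :=
  spanning_tree Rr[i] (indecomposable_connect r0_nz S_indec).
exists ij, (fun l => (size (Bpoly r0 S (ij l).1 (ij l).2)).-1); split.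
- exact: ij_inj.
- exact: ij_offdiag.
- move=> l; exact: (@Bpoly_offdiag_degree _ n k r0 S _ _ A0_diag (ij_offdiag l) (ij_nz l)).
- exact: (@normalizing_gauge_exists _ n k r0 S _ ij ij_nz ij_potential).
split; first exact: (@normalized_gauge_unique _ n k r0 S _ ij ij_nz ij_span).
exact: (@normalized_automorphismP _ n k r0 S _ ij ij_span A0_diag A0_distinct).
Qed.
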